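(* Let $L_1$ be a finite-dimensional non-nilpotent Lie algebra over a field $F$. For every finite-dimensional nilpotent Lie algebra $L$ over $F$, the number of connected components of $\Gamma_{\mathfrak{N}}(L_1\oplus L)$ equals the number of connected components of $\Gamma_{\mathfrak{N}}(L_1)$. In particular, $\Gamma_{\mathfrak{N}}(L_1)$ is connected if and only if $\Gamma_{\mathfrak{N}}(L_1\oplus L)$ is connected for every finite-dimensional nilpotent Lie algebra $L$.
   Context: $\langle a,b\rangle$ denotes the Lie subalgebra generated by $a,b$, and $\mathrm{nil}(L)=\{x\in L\mid \langle h,x\rangle \text{ is nilpotent for all } h\in L\}$. For a finite-dimensional non-nilpotent Lie algebra $L$, the nilpotent graph $\Gamma_{\mathfrak{N}}(L)$ is the simple undirected graph with vertex set $L\setminus\mathrm{nil}(L)$ in which distinct vertices $x,y$ are adjacent iff $\langle x,y\rangle$ is nilpotent. $L_1\oplus L$ is the direct sum of Lie algebras with componentwise bracket. *)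

From HB Require Import structures.
From mathcomp Require Import all_boot all_algebra.
From mathcomp Require Import boolp classical_sets cardinality.
Set Implicit Arguments.
Unset Strict Implicit.
Unset Printing Implicit Defensive.
Import GRing.Theory.
Local Open Scope ring_scope.
Local Open Scope classical_set_scope.

(* Lie algebras over a field F, carried by an F-module V with a bracket b.
   Finite-dimensionality is imposed in the theorem by taking V : vectType F. *)
Section Lie.
Variables (F : fieldType) (V : lmodType F).
Implicit Types (b : V -> V -> V) (S U A : set V).

Definition lie_bracket b : Prop :=
  [/\ forall a x y z, b (a *: x + y) z = a *: b x z + b y z,
      forall a x y z, b x (a *: y + z) = a *: b x y + b x z,
      forall x, b x x = 0 &
      forall x y z, b x (b y z) + b y (b z x) + b z (b x y) = 0].

Definition is_subspace U : Prop :=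
  U 0 /\ forall a x y, U x -> U y -> U (a *: x + y).
Definition is_subalgebra b U : Prop :=
  is_subspace U /\ forall x y, U x -> U y -> U (b x y).

Definition lspan A : set V :=
  [set x | forall U, is_subspace U -> A `<=` U -> U x].

Definition gen_sub b (a c : V) : set V :=
  [set x | forall U, is_subalgebra b U -> U a -> U c -> U x].

(* lower central series of a subalgebra S: S^1 = S, S^(k+1) = [S, S^k] *)
Fixpoint lcs b S (n : nat) : set V :=
  if n is k.+1 then lspan [set z | exists x y, [/\ S x, lcs b S k y & z = b x y]]
  else S.

Definition nilpotent_sub b S : Prop := exists n, lcs b S n `<=` [set 0].
Definition nilpotent_lie b : Prop := nilpotent_sub b setT.

Definition nil_set b : set V :=
  [set x | forall h, nilpotent_sub b (gen_sub b h x)].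

Definition ng_vertex b : set V := ~` nil_set b.
Definition ng_adj b (x y : V) : Prop :=
  [/\ ng_vertex b x, ng_vertex b y, x <> y & nilpotent_sub b (gen_sub b x y)].

Inductive ng_conn b (x : V) : V -> Prop :=
  | ng_conn_refl : ng_vertex b x -> ng_conn b x x
  | ng_conn_step y z : ng_conn b x y -> ng_adj b y z -> ng_conn b x z.

Definition ng_components b : set (set V) :=
  [set C | exists x, ng_vertex b x /\ C = [set y | ng_conn b x y]].

Definition ng_connected b : Prop :=
  (exists x, ng_vertex b x) /\
  forall x y, ng_vertex b x -> ng_vertex b y -> ng_conn b x y.

End Lie.

Definition lie_dsum (F : fieldType) (V1 V2 : lmodType F)
  (b1 : V1 -> V1 -> V1) (b2 : V2 -> V2 -> V2) : (V1 * V2)%type -> (V1 * V2)%type -> (V1 * V2)%type :=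
  fun p q => (b1 p.1 q.1, b2 p.2 q.2).

From HB Require Import structures.
From mathcomp Require Import all_boot all_algebra.
From mathcomp Require Import boolp classical_sets cardinality.

(* For a nilpotent [L], a subalgebra <(x, u), (y, v)> of [L1 (+) L] is
   nilpotent iff <x, y> is: its lower central series lies inside the product
   of those of <x, y> and of [L], and projects onto that of <x, y>.  Hence
   nil(L1 (+) L) = nil(L1) x L, and the nilpotent graph of the sum is the
   "blow-up" of that of [L1] in which every vertex x is replaced by the
   clique {x} x L.  The first projection therefore maps paths to paths
   (dropping the steps inside a fibre) and paths lift along any section, so
   the components of the sum are exactly the preimages of the components of
   [L1].  Taking for [L] the abelian algebra on the carrier of [L1] gives the
   converse in the connectivity statement. *)

Set Implicit Arguments.
Unset Strict Implicit.
Unset Printing Implicit Defensive.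
Import GRing.Theory.
Local Open Scope ring_scope.
Local Open Scope classical_set_scope.
Local Open Scope card_scope.

Section LieSubalgebras.
Variables (F : fieldType) (V : lmodType F) (b : V -> V -> V).

Lemma lspan_min (A U : set V) : is_subspace U -> A `<=` U -> lspan A `<=` U.
Proof. by move=> hU hA x; apply. Qed.

Lemma subset_lspan (A : set V) : A `<=` lspan A.
Proof. by move=> x hx U _; apply. Qed.

Lemma lspan_subspace (A : set V) : is_subspace (lspan A).
Proof.
split; first by move=> U [].
by move=> a x y hx hy U hU hA; apply: hU.2; [apply: hx | apply: hy].
Qed.

Lemma subspace_set0 : is_subspace [set (0 : V)].
Proof. by split => // a x y -> ->; rewrite scaler0 addr0. Qed.

Lemma gen_sub_subalgebra a c : is_subalgebra b (gen_sub b a c).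
Proof.
split; first split.
- by move=> U [[]].
- by move=> t x y hx hy U hU ha hc; apply: hU.1.2; [apply: hx | apply: hy].
- by move=> x y hx hy U hU ha hc; apply: hU.2; [apply: hx | apply: hy].
Qed.

Lemma gen_sub_min a c (U : set V) :
  is_subalgebra b U -> U a -> U c -> gen_sub b a c `<=` U.
Proof. by move=> hU ha hc x; apply. Qed.

Lemma gen_sub_l a c : gen_sub b a c a.
Proof. by move=> U. Qed.

Lemma gen_sub_r a c : gen_sub b a c c.
Proof. by move=> U. Qed.

Hypothesis hb : lie_bracket b.

Lemma lie0r x : b x 0 = 0.
Proof.
have [_ linr _ _] := hb; have := linr 1 x 0 0; rewrite scaler0 addr0 scale1r.
by move=> double; apply: (addrI (b x 0)); rewrite addr0 -double.
Qed.

Lemma lie0l x : b 0 x = 0.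
Proof.
have [linl _ _ _] := hb; have := linl 1 0 0 x; rewrite scaler0 addr0 scale1r.
by move=> double; apply: (addrI (b 0 x)); rewrite addr0 -double.
Qed.

Lemma lieZl a x y : b (a *: x) y = a *: b x y.
Proof. by have [linl _ _ _] := hb; rewrite -[a *: x]addr0 linl lie0l addr0. Qed.

Lemma lieZr a x y : b x (a *: y) = a *: b x y.
Proof. by have [_ linr _ _] := hb; rewrite -[a *: y]addr0 linr lie0r addr0. Qed.

Lemma lcs_sub0_addn (S : set V) n k :
  lcs b S n `<=` [set 0] -> lcs b S (n + k) `<=` [set 0].
Proof.
move=> hn; elim: k => [|k IH]; first by rewrite addn0.
rewrite addnS; apply: lspan_min; first exact: subspace_set0.
by move=> _ [x [y [_ /IH -> ->]]]; rewrite lie0r.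
Qed.

Lemma nilpotent_gen_sub_diag x : nilpotent_sub b (gen_sub b x x).
Proof.
have [_ _ liexx _] := hb.
have sub_line : gen_sub b x x `<=` [set y | exists t : F, y = t *: x].
  have x_line : exists t : F, x = t *: x by exists 1; rewrite scale1r.
  apply: (gen_sub_min _ x_line x_line); split; first split.
  - by exists 0; rewrite scale0r.
  - by move=> a _ _ [t ->] [s ->]; exists (a * t + s); rewrite scalerDl scalerA.
  - move=> _ _ [t ->] [s ->]; exists 0.
    by rewrite lieZl lieZr liexx !scaler0 scale0r.
exists 1%N; apply: lspan_min; first exact: subspace_set0.
move=> _ [_ [_ [/sub_line [t ->] /sub_line [s ->] ->]]].
by rewrite lieZl lieZr liexx !scaler0.
Qed.

End LieSubalgebras.

Lemma lie_bracket_zero (F : fieldType) (V : lmodType F) :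
  lie_bracket (fun _ _ : V => 0).
Proof. by split=> *; rewrite ?scaler0 ?addr0. Qed.

Lemma nilpotent_lie_zero (F : fieldType) (V : lmodType F) :
  nilpotent_lie (fun _ _ : V => 0).
Proof.
exists 1%N; apply: lspan_min; first exact: subspace_set0.
by move=> _ [_ [_ [_ _ ->]]].
Qed.

Section DirectSum.
Variables (F : fieldType) (V1 V2 : lmodType F).
Variables (b1 : V1 -> V1 -> V1) (b2 : V2 -> V2 -> V2).
Local Notation b := (lie_dsum b1 b2).

Lemma lcs_dsum_sub (S : set (V1 * V2)) (A : set V1) (B : set V2) n :
  S `<=` [set p | A p.1 /\ B p.2] ->
  lcs b S n `<=` [set p | lcs b1 A n p.1 /\ lcs b2 B n p.2].
Proof.
move=> hS; elim: n => [|n IH] //; apply: lspan_min.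
- split; first by split; exact: (proj1 (lspan_subspace _)).
  by move=> a x y [hx1 hx2] [hy1 hy2]; split; exact: (proj2 (lspan_subspace _)).
- move=> _ [x [y [/hS [hx1 hx2] /IH [hy1 hy2] ->]]].
  by split; apply: subset_lspan; [exists x.1, y.1 | exists x.2, y.2].
Qed.

Lemma lcs_dsum_lift (S : set (V1 * V2)) (A : set V1) n :
  A `<=` [set x | exists y, S (x, y)] ->
  lcs b1 A n `<=` [set x | exists y, lcs b S n (x, y)].
Proof.
move=> hS; elim: n => [|n IH] //; apply: lspan_min.
- split; first by exists 0; exact: (proj1 (lspan_subspace _)).
  move=> a u v [y1 h1] [y2 h2]; exists (a *: y1 + y2).
  exact: (proj2 (lspan_subspace _)) a (u, y1) (v, y2) h1 h2.
- move=> _ [u [v [/hS [yu hu] /IH [yv hv] ->]]].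
  by exists (b2 yu yv); apply: subset_lspan; exists (u, yu), (v, yv).
Qed.

Lemma nilpotent_gen_sub_fst (p q : V1 * V2) :
  nilpotent_sub b (gen_sub b p q) -> nilpotent_sub b1 (gen_sub b1 p.1 q.1).
Proof.
move=> [n hn]; exists n.
set G := gen_sub b p q; have [[_ linG] lieG] := gen_sub_subalgebra b p q.
have fst_G : gen_sub b1 p.1 q.1 `<=` [set x | exists y, G (x, y)].
  apply: gen_sub_min.
  - split; first split.
    + by exists 0; exact: (gen_sub_subalgebra b p q).1.1.
    + move=> a x y [y1 h1] [y2 h2].
      by exists (a *: y1 + y2); exact: linG a (x, y1) (y, y2) h1 h2.
    + move=> x y [y1 h1] [y2 h2].
      by exists (b2 y1 y2); exact: lieG (x, y1) (y, y2) h1 h2.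
  - by exists p.2; rewrite -surjective_pairing; exact: gen_sub_l.
  - by exists q.2; rewrite -surjective_pairing; exact: gen_sub_r.
by move=> x /(lcs_dsum_lift fst_G) [y /hn /(congr1 fst)].
Qed.

Hypotheses (hb1 : lie_bracket b1) (hb2 : lie_bracket b2).
Hypothesis nil_b2 : nilpotent_lie b2.

Lemma nilpotent_gen_sub_dsum (p q : V1 * V2) :
  nilpotent_sub b1 (gen_sub b1 p.1 q.1) -> nilpotent_sub b (gen_sub b p q).
Proof.
move: nil_b2 => [n2 hn2] [n1 hn1].
set A := gen_sub b1 p.1 q.1; have [[A0 linA] lieA] := gen_sub_subalgebra b1 p.1 q.1.
have G_A : gen_sub b p q `<=` [set r | A r.1].
  apply: gen_sub_min; [|exact: gen_sub_l|exact: gen_sub_r].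
  split; first split => //.
  - by move=> a x y; apply: linA.
  - by move=> x y; apply: lieA.
exists (n1 + n2)%N => -[u v] /(@lcs_dsum_sub _ A setT) [].
- by move=> r /G_A.
- move=> /(lcs_sub0_addn hb1 hn1) /= -> /=.
  by rewrite addnC => /(lcs_sub0_addn hb2 hn2) /= ->.
Qed.

Lemma nilpotent_gen_sub_dsumE (p q : V1 * V2) :
  nilpotent_sub b (gen_sub b p q) <-> nilpotent_sub b1 (gen_sub b1 p.1 q.1).
Proof. by split; [exact: nilpotent_gen_sub_fst | exact: nilpotent_gen_sub_dsum]. Qed.

Lemma ng_vertex_dsumE (p : V1 * V2) : ng_vertex b p <-> ng_vertex b1 p.1.
Proof.
suff nilE : nil_set b p <-> nil_set b1 p.1.
  by split=> hv /nilE.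
split=> hnil h; first by apply: (@nilpotent_gen_sub_fst (h, 0)); apply: hnil.
by apply/nilpotent_gen_sub_dsumE; apply: hnil.
Qed.

Lemma ng_adj_dsum (p q : V1 * V2) :
  ng_adj b1 p.1 q.1 -> ng_adj b p q.
Proof.
move=> [hp hq ne nilpq]; split; rewrite ?ng_vertex_dsumE //.
- by move=> epq; apply: ne; rewrite epq.
- exact/nilpotent_gen_sub_dsumE.
Qed.

Lemma ng_adj_dsum_fibre (p q : V1 * V2) :
  ng_vertex b1 p.1 -> p.1 = q.1 -> p <> q -> ng_adj b p q.
Proof.
move=> hp epq ne; split; rewrite ?ng_vertex_dsumE -?epq //.
by apply/nilpotent_gen_sub_dsumE; rewrite -epq; exact: nilpotent_gen_sub_diag.
Qed.

Lemma ng_conn_dsum_fst (p q : V1 * V2) : ng_conn b p q -> ng_conn b1 p.1 q.1.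
Proof.
elim=> [/ng_vertex_dsumE /ng_conn_refl // | r s _ IH [hr hs _ nilrs]].
have [<- // | ne] := pselect (r.1 = s.1).
apply: ng_conn_step IH _; split; rewrite -?ng_vertex_dsumE //.
exact: nilpotent_gen_sub_fst.
Qed.

Lemma ng_conn_dsum_lift (p : V1 * V2) x :
  ng_conn b1 p.1 x -> forall q, q.1 = x -> ng_conn b p q.
Proof.
elim=> [hp | y z _ IH adj_yz] q eq_q.
- have [<- | ne] := pselect (p = q); first exact/ng_conn_refl/ng_vertex_dsumE.
  apply: ng_conn_step (ng_conn_refl _) (ng_adj_dsum_fibre _ _ ne) => //.
  exact/ng_vertex_dsumE.
- apply: (@ng_conn_step _ _ _ _ (y, q.2)); first exact: IH.
  by apply: ng_adj_dsum; rewrite eq_q.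
Qed.

Lemma ng_conn_dsumE (p q : V1 * V2) : ng_conn b p q <-> ng_conn b1 p.1 q.1.
Proof.
by split=> [/ng_conn_dsum_fst // | /ng_conn_dsum_lift]; apply.
Qed.

Lemma ng_component_dsum (p : V1 * V2) :
  [set q | ng_conn b p q] = fst @^-1` [set x | ng_conn b1 p.1 x].
Proof. by apply/seteqP; split=> q /ng_conn_dsumE. Qed.

Lemma ng_components_dsum : ng_components b #= ng_components b1.
Proof.
have -> : ng_components b = preimage fst @` ng_components b1.
  apply/seteqP; split.
  - move=> _ [p [hp ->]]; rewrite ng_component_dsum.
    by exists [set x | ng_conn b1 p.1 x] => //; exists p.1; rewrite -ng_vertex_dsumE.
  - move=> _ [_ [x [hx ->]] <-]; exists (x, 0).
    by rewrite ng_vertex_dsumE ng_component_dsum.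
apply: inj_card_eq => C D _ _ eCD; apply/seteqP; split=> x;
  by have /= := congr1 (@^~ (x, 0)) eCD => ->.
Qed.

Lemma ng_connected_dsumE : ng_connected b <-> ng_connected b1.
Proof.
split=> -[[p hp] conn].
- split=> [|x y hx hy]; first by exists p.1; rewrite -ng_vertex_dsumE.
  by apply/(@ng_conn_dsumE (x, 0) (y, 0)); apply: conn; rewrite ng_vertex_dsumE.
- split=> [|r s hr hs]; first by exists (p, 0); rewrite ng_vertex_dsumE.
  by apply/ng_conn_dsumE; apply: conn; rewrite -ng_vertex_dsumE.
Qed.

End DirectSum.

Theorem theorem5p4 (F : fieldType) (V1 : vectType F) (b1 : V1 -> V1 -> V1)
  (hb1 : lie_bracket b1) (hnn : ~ nilpotent_lie b1) :
  (forall (V : vectType F) (b : V -> V -> V),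
     lie_bracket b -> nilpotent_lie b ->
     ng_components (lie_dsum b1 b) #= ng_components b1) /\
  (ng_connected b1 <->
     forall (V : vectType F) (b : V -> V -> V),
       lie_bracket b -> nilpotent_lie b -> ng_connected (lie_dsum b1 b)).
Proof.
split; first by move=> V b hb nil_b; exact: ng_components_dsum.
split=> [conn1 V b hb nil_b | conn_all]; first by rewrite ng_connected_dsumE.
have abelian_V1 := lie_bracket_zero V1; have nil_abelian := nilpotent_lie_zero V1.
exact/(ng_connected_dsumE hb1 abelian_V1 nil_abelian)/conn_all.
Qed.
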